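(* Let $\mathbb F_0$ be a field and $\mathbb F=\mathbb F_0(\omega)$ a degree-$2$ extension field of $\mathbb F_0$. Let $h,d,n$ be nonnegative integers with $h\le d$, and let $A,B\in \mathbb F_0^{d\times n}$ be matrices with $\mathrm{rank}(A+\omega B)=d$. If $\mathrm{rank}\binom{A}{B}=2d-h$, then there is a matrix $Q\in \mathbb F^{h\times d}$ of rank $h$ such that $Q(A+\omega B)$ has all its entries in $\mathbb F_0$.
   Context: $\binom{A}{B}$ denotes the $2d\times n$ matrix obtained by stacking $A$ above $B$. *)

From HB Require Import structures.
From mathcomp Require Import all_boot all_order all_algebra all_field.
Set Implicit Arguments. Unset Strict Implicit. Unset Printing Implicit Defensive.
Import GRing.Theory.
Local Open Scope ring_scope.

Definition liftmx (F0 : fieldType) (L : fieldExtType F0) (m n : nat)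
  (A : 'M[F0]_(m, n)) : 'M[L]_(m, n) := map_mx (in_alg L) A.

From HB Require Import structures.
From mathcomp Require Import all_boot all_order all_algebra all_field.
From mathcomp Require Import zify.
Set Implicit Arguments.
Unset Strict Implicit.
Unset Printing Implicit Defensive.

Import GRing.Theory.
Local Open Scope ring_scope.

(* Write w^2 = a + b w with a, b in F0.  Replacing A by A + b B does not
   change the row space of (A; B), so the left kernel of (B; A + b B) has
   dimension h; for a basis (Y1 Y2) of it, Q := Y1 + w Y2 satisfies
   Q (A + w B) = Y1 A + a Y2 B + w (Y1 B + Y2 (A + b B)) = Y1 A + a Y2 B.
   Since 1, w are independent over F0 and A + w B is row free, a left null
   vector of Y1 A + a Y2 B over F0 is a left null vector of (Y1 Y2), so
   Y1 A + a Y2 B has rank h, which bounds the rank of Q from below. *)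

Lemma row_free_left_kernel (F : fieldType) (m n k : nat) (S : 'M[F]_(m, n)) :
  k = (m - \rank S)%N -> exists Y : 'M[F]_(k, m), row_free Y /\ Y *m S = 0.
Proof.
rewrite -mxrank_ker => ->; exists (row_base (kermx S)); split.
  exact: row_base_free.
by apply/sub_kermxP; rewrite eq_row_base submx_refl.
Qed.

Lemma eqmx_col_mx_shear (F : fieldType) (m n : nat) (A B : 'M[F]_(m, n)) (b : F) :
  (col_mx B (A + b *: B) :=: col_mx A B)%MS.
Proof.
apply/eqmxP; rewrite -!addsmxE; apply/andP; split.
  rewrite addsmx_sub addsmxSr /=.
  by apply: addmx_sub; [exact: addsmxSl | apply: scalemx_sub; exact: addsmxSr].
rewrite addsmx_sub addsmxSl andbT.
have eA : A = (A + b *: B) + (- b) *: B by rewrite scaleNr addrK.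
rewrite [X in (X <= _)%MS]eA.
by apply: addmx_sub; [exact: addsmxSr | apply: scalemx_sub; exact: addsmxSl].
Qed.

Section QuadraticExtension.

Variables (F0 : fieldType) (L : fieldExtType F0) (w : L).
Hypotheses (dimL : \dim {:L} = 2%N) (genL : <<1%AS; w>>%VS = fullv).

Lemma quadratic_relation : exists a b : F0, w * w = a%:A + w * b%:A.
Proof.
have deg2 : adjoin_degree 1%AS w = 2%N.
  by have := dim_Fadjoin 1%AS w; rewrite genL dimL dimv1 muln1.
have := @Fadjoin_poly_eq _ _ 1%AS w (w * w) (ltac:(by rewrite genL memvf)).
set p := Fadjoin_poly _ _ _.
have sz_p : (size p <= 2)%N by rewrite -deg2 size_Fadjoin_poly.
have /polyOverP p_coef := Fadjoin_polyOver 1%AS w (w * w).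
rewrite (horner_coef_wide _ sz_p) !big_ord_recr big_ord0 /= add0r expr0 expr1.
rewrite mulr1 => <-.
have [a ->] := vlineP _ _ (p_coef 0%N).
have [b ->] := vlineP _ _ (p_coef 1%N).
by exists a, b; rewrite mulrC.
Qed.

Lemma gen_notin1 : w \notin 1%VS.
Proof.
apply/negP => /Fadjoin_idP; rewrite genL => full1.
by have := dimv1 L; rewrite -full1 dimL.
Qed.

Lemma scalar_comb_eq0 (c1 c2 : F0) : c1%:A + w * c2%:A = 0 -> c1 = 0 /\ c2 = 0.
Proof.
have [-> | c2_neq0] := eqVneq c2 0.
  by rewrite scale0r mulr0 addr0 => /eqP; rewrite scaler_eq0 oner_eq0 orbF => /eqP.
move=> eq0; have algC2 : c2%:A != 0 :> L by rewrite scaler_eq0 oner_eq0 orbF.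
have wE : w = (- c1 / c2)%:A.
  rewrite -[_%:A]/(in_alg L _) fmorph_div rmorphN /=.
  apply: (canRL (mulfK algC2)); apply/eqP; rewrite -addr_eq0 addrC.
  exact/eqP.
by have := gen_notin1; rewrite wE memvZ ?mem1v.
Qed.

Lemma lift_comb_eq0 (m n : nat) (X Y : 'M[F0]_(m, n)) :
  liftmx L X + w *: liftmx L Y = 0 -> X = 0 /\ Y = 0.
Proof.
move=> eq0; suff XY0 i j : X i j = 0 /\ Y i j = 0.
  by split; apply/matrixP => i j; rewrite mxE; case: (XY0 i j).
apply: scalar_comb_eq0.
by have := congr1 (fun M : 'M[L]_(m, n) => M i j) eq0; rewrite !mxE mulrC.
Qed.

Lemma mul_lift_comb (a b : F0) (ww : w * w = a%:A + w * b%:A) (m p n : nat)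
    (Y1 Y2 : 'M[F0]_(m, p)) (A B : 'M[F0]_(p, n)) :
  (liftmx L Y1 + w *: liftmx L Y2) *m (liftmx L A + w *: liftmx L B) =
  liftmx L (Y1 *m A + a *: (Y2 *m B)) + w *: liftmx L (Y1 *m B + Y2 *m (A + b *: B)).
Proof.
rewrite /liftmx !map_mxD !map_mxZ !map_mxM.
rewrite !mulmxDl !mulmxDr map_mxD map_mxZ mulmxDr -!scalemxAl -!scalemxAr.
rewrite !scalerA ww scalerDl -scalerA !scalerDr.
by rewrite -!addrA; congr (_ + _); rewrite [RHS]addrCA; congr (_ + _); apply: addrCA.
Qed.

Lemma row_free_lift_mul (m p n : nat) (Y1 Y2 : 'M[F0]_(m, p))
    (M : 'M[L]_(p, n)) (C : 'M[F0]_(m, n)) :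
  row_free (row_mx Y1 Y2) -> row_free M ->
  (liftmx L Y1 + w *: liftmx L Y2) *m M = liftmx L C -> row_free C.
Proof.
move=> freeY freeM QM; apply: inj_row_free => z zC0.
have /eqP : (liftmx L z *m (liftmx L Y1 + w *: liftmx L Y2)) *m M = 0.
  by rewrite -mulmxA QM /liftmx -map_mxM zC0 map_mx0.
rewrite mulmx_free_eq0 // mulmxDr -scalemxAr /liftmx -!map_mxM.
move=> /eqP /lift_comb_eq0 [zY1 zY2].
by apply: (row_free_inj freeY); rewrite mul0mx mul_mx_row zY1 zY2 row_mx0.
Qed.

End QuadraticExtension.

Theorem lemma3p3 (F0 : fieldType) (L : fieldExtType F0) (w : L)
  (hdeg : \dim {:L} = 2%N)
  (hgen : <<1%AS; w>>%VS = fullv)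
  (h d n : nat) (hle : (h <= d)%N)
  (A B : 'M[F0]_(d, n))
  (hrk : \rank (liftmx L A + w *: liftmx L B)%R = d)
  (hrkAB : \rank (col_mx A B) = (2 * d - h)%N) :
  exists Q : 'M[L]_(h, d),
    \rank Q = h /\
    exists C : 'M[F0]_(h, n), Q *m (liftmx L A + w *: liftmx L B) = liftmx L C.
Proof.
have [a [b ww]] := quadratic_relation hdeg hgen.
have [Y [freeY kerY]] :
    exists Y : 'M[F0]_(h, d + d), row_free Y /\ Y *m col_mx B (A + b *: B) = 0.
  by apply: row_free_left_kernel; rewrite eqmx_col_mx_shear hrkAB; lia.
have ker12 : lsubmx Y *m B + rsubmx Y *m (A + b *: B) = 0.
  by rewrite -mul_row_col hsubmxK.
set Q := liftmx L (lsubmx Y) + w *: liftmx L (rsubmx Y).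
set C := lsubmx Y *m A + a *: (rsubmx Y *m B).
have QM : Q *m (liftmx L A + w *: liftmx L B) = liftmx L C.
  by rewrite (mul_lift_comb ww) ker12 /liftmx map_mx0 scaler0 addr0.
have freeC : row_free C.
  by apply: row_free_lift_mul QM; rewrite ?hsubmxK // /row_free hrk.
exists Q; split; last by exists C.
have rankCQ : (\rank C <= \rank Q)%N.
  by rewrite -(mxrank_map (in_alg L) C) -[map_mx _ C]/(liftmx L C) -QM mxrankM_maxl.
by apply/eqP; rewrite eqn_leq rank_leq_row -[X in (X <= _)%N](eqP freeC).
Qed.
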